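(* Let $u\ge1$ be an integer, $H$ a graph containing $K_u$, and $\mathcal{F}$ a set of connected graphs none of which is a subgraph of $K_u$. Suppose there is an $\mathcal{F}$-free graph $L$ with $k^u(L)\ge1$, $\mathcal{N}(H,L)\ge1$, and $\rho_u(H,L)=P_u(H,\mathcal{F})$. For each $p\ge1$ write $p=q\,k^u(L)+r$ with integers $q\ge0$, $0\le r<k^u(L)$. Then \[ \lim_{p\to\infty}\frac{\mathrm{ex}_u(p,H,\mathcal{F})}{\mathcal{N}(H,qL\cup rK_u)}=1\quad\text{and}\quad \lim_{p\to\infty}\frac{\mathrm{ex}_u(p,H,\mathcal{F})}{\frac{\mathcal{N}(H,L)}{k^u(L)}\,p}=1 . \] Moreover, whenever $k^u(L)$ divides $p$, $\mathrm{ex}_u(p,H,\mathcal{F})=\mathcal{N}\big(H,\frac{p}{k^u(L)}L\big)$.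
   Context: All graphs are finite and simple. $\mathcal{N}(H,G)$ is the number of (not necessarily induced) subgraphs of $G$ isomorphic to $H$; $k^u(G)=\mathcal{N}(K_u,G)$. A graph is $\mathcal{F}$-free if it has no subgraph isomorphic to a member of $\mathcal{F}$. $\mathrm{ex}_u(p,H,\mathcal{F})\in[0,\infty]$ is the supremum of $\mathcal{N}(H,G)$ over all $\mathcal{F}$-free graphs $G$ with $k^u(G)=p$. $\rho_u(H,G)=\mathcal{N}(H,G)/k^u(G)$. $P_u(H,\mathcal{F})=\lim_{p\to\infty}\mathrm{ex}_u(p,H,\mathcal{F})/p$ (this limit exists in $[0,\infty]$ under the stated hypotheses). $qL\cup rK_u$ denotes the disjoint union of $q$ copies of $L$ and $r$ copies of $K_u$. *)

From HB Require Import structures.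
From mathcomp Require Import all_boot all_order all_algebra.
From mathcomp Require Import all_classical all_reals all_analysis.
Set Implicit Arguments. Unset Strict Implicit. Unset Printing Implicit Defensive.
Import Order.TTheory GRing.Theory Num.Theory.

Record graph := Graph {
  gV :> finType;
  gadj : rel gV;
  gsym : symmetric gadj;
  girr : irreflexive gadj }.

Arguments gadj {g}.

(* S (vertex set) together with E (edge set, as 2-element vertex sets) is a
   subgraph of G isomorphic to H. *)
Definition is_edge (G : graph) (e : {set gV G}) : bool :=
  [exists x : gV G, exists y : gV G, gadj x y && (e == [set x; y])].

Definition is_copy (H G : graph) (S : {set gV G}) (E : {set {set gV G}}) : bool :=
  [forall e in E, is_edge e && (e \subset S)] &&
  [exists f : {ffun gV H -> gV G},
     [&& injectiveb f, f @: setT == S &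
         [forall x : gV H, forall y : gV H, gadj x y == ([set f x; f y] \in E)]]].

(* N(H,G): number of (not necessarily induced) subgraphs of G isomorphic to H *)
Definition Ncount (H G : graph) : nat :=
  #|[set SE : {set gV G} * {set {set gV G}} | is_copy H SE.1 SE.2]|.

Lemma K_sym (u : nat) : symmetric (fun i j : 'I_u => i != j).
Proof. by move=> i j; rewrite eq_sym. Qed.
Lemma K_irr (u : nat) : irreflexive (fun i j : 'I_u => i != j).
Proof. by move=> i; rewrite eqxx. Qed.
Definition Kgraph (u : nat) : graph := @Graph 'I_u _ (@K_sym u) (@K_irr u).

Definition ku (u : nat) (G : graph) : nat := Ncount (Kgraph u) G.

Definition union_adj (G1 G2 : graph) : rel (gV G1 + gV G2)%type :=
  fun a b => match a, b with
             | inl x, inl y => gadj x y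
             | inr x, inr y => gadj x y
             | _, _ => false end.
Lemma union_sym G1 G2 : symmetric (@union_adj G1 G2).
Proof. by case=> x [] y //=; rewrite gsym. Qed.
Lemma union_irr G1 G2 : irreflexive (@union_adj G1 G2).
Proof. by case=> x /=; rewrite girr. Qed.
Definition gunion (G1 G2 : graph) : graph :=
  @Graph (gV G1 + gV G2)%type _ (@union_sym G1 G2) (@union_irr G1 G2).

Definition copies_adj (q : nat) (G : graph) : rel ('I_q * gV G)%type :=
  fun a b => (a.1 == b.1) && gadj a.2 b.2.
Lemma copies_sym q G : symmetric (@copies_adj q G).
Proof. by move=> a b; rewrite /copies_adj eq_sym gsym. Qed.
Lemma copies_irr q G : irreflexive (@copies_adj q G).
Proof. by move=> a; rewrite /copies_adj girr andbF. Qed.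
Definition copies (q : nat) (G : graph) : graph :=
  @Graph ('I_q * gV G)%type _ (@copies_sym q G) (@copies_irr q G).

Definition connected_graph (G : graph) : bool :=
  (0 < #|gV G|) && [forall x : gV G, forall y : gV G, connect gadj x y].

Definition Ffree (F : graph -> Prop) (G : graph) : Prop :=
  forall F0, F F0 -> Ncount F0 G = 0%N.

Local Open Scope ring_scope.
Local Open Scope ereal_scope.

(* ex_u(p,H,F) in [0, +oo]: supremum of N(H,G) over F-free G with k^u(G) = p
   (supremum of the empty set in [0,+oo] is 0). *)
Definition exu (R : realType) (u p : nat) (H : graph) (F : graph -> Prop) : \bar R :=
  ereal_sup ([set 0] `|`
    [set x | exists G : graph, [/\ Ffree F G, ku u G = p & x = ((Ncount H G)%:R)%:E]]).

Definition rhou (R : realType) (u : nat) (H G : graph) : R :=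
  ((Ncount H G)%:R / (ku u G)%:R)%R.

Definition Pu (R : realType) (u : nat) (H : graph) (F : graph -> Prop) : \bar R :=
  limn (fun p : nat => exu R u p H F * ((p%:R)^-1)%:E).

From HB Require Import structures.
From mathcomp Require Import all_boot all_order all_algebra.
From mathcomp Require Import all_classical all_reals all_analysis.
From mathcomp Require Import lra.
Import Order.TTheory GRing.Theory Num.Theory.
Set Implicit Arguments. Unset Strict Implicit. Unset Printing Implicit Defensive.

(* Every member of F is connected, so disjoint unions of F-free graphs are F-free and
   counts of connected graphs (K_u in particular) add up over disjoint unions.  Hence
   q L + r K_u is an F-free graph with k^u = p, and ex_u(p) >= N(H, q L + r K_u)
   >= q N(H, L).  Conversely, for an F-free G with k^u(G) = p, m disjoint copies of G
   show ex_u(m p) / (m p) >= N(H, G) / p; letting m grow gives N(H, G) <= rho p with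
   rho = N(H, L) / k^u(L) = P_u.  So q N(H, L) <= N(H, q L + r K_u) <= ex_u(p)
   <= rho p <= (q + 1) N(H, L), and both ratios are within 1/q of 1. *)

Lemma gadj_neq (G : graph) (a b : gV G) : gadj a b -> a != b.
Proof. by apply: contraTneq => ->; rewrite girr. Qed.

Lemma set2_eq_cases (T : finType) (a b c d : T) :
  [set a; b] = [set c; d] -> c != d -> (a = c /\ b = d) \/ (a = d /\ b = c).
Proof.
move=> E ncd.
have : a \in [set c; d] by rewrite -E set21.
have : b \in [set c; d] by rewrite -E set22.
have : c \in [set a; b] by rewrite E set21.
have : d \in [set a; b] by rewrite E set22.
rewrite !finset.inE => + + /orP[]/eqP hb /orP[]/eqP ha; subst => //; try by [left|right].
- by rewrite orbb => /eqP hd; rewrite hd eqxx in ncd.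
- by move=> _ /orP[]/eqP hc; rewrite hc eqxx in ncd.
Qed.

Section CopiesOfH.
Variables H G : graph.
Implicit Types (f : gV H -> gV G) (SE : {set gV G} * {set {set gV G}}).

Definition edge_image f : {set {set gV G}} :=
  [set e | [exists x, exists y, gadj x y && (e == [set f x; f y])]].

(* As in [is_copy], [setT] is the full set of classical_sets, whose membership
   goals are closed by its own [in_setT]. *)
Definition copy_of f := (f @: setT, edge_image f).

Definition copy_set := [set SE : {set gV G} * {set {set gV G}} | is_copy H SE.1 SE.2].

Lemma NcountE : Ncount H G = #|copy_set|. Proof. by []. Qed.

Lemma eq_edge_image f g : f =1 g -> edge_image f = edge_image g.
Proof.
by move=> fg; apply/setP => e; rewrite !finset.inE;
  under eq_existsb do under eq_existsb do rewrite !fg.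
Qed.

Lemma eq_copy_of f g : f =1 g -> copy_of f = copy_of g.
Proof. by move=> fg; rewrite /copy_of (eq_imset _ fg) (eq_edge_image fg). Qed.

Lemma copy_of_in f :
  injective f -> {homo f : x y / gadj x y} -> copy_of f \in copy_set.
Proof.
move=> finj fhom; rewrite finset.inE /=; apply/andP; split.
  apply/forall_inP => e; rewrite finset.inE => /existsP[x /existsP[y /andP[xy /eqP ->]]].
  apply/andP; split.
    by apply/existsP; exists (f x); apply/existsP; exists (f y); rewrite (fhom _ _ xy) eqxx.
  apply/fintype.subsetP => z; rewrite !finset.inE.
  by case/orP=> /eqP ->; exact: imset_f (in_setT _).
apply/existsP; exists [ffun x => f x]; apply/and3P; split.
- by apply/injectiveP => x y; rewrite !ffunE; apply: finj.
- by apply/eqP; apply: eq_imset => x; rewrite ffunE.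
apply/forallP => x; apply/forallP => y; rewrite !ffunE finset.inE; apply/eqP; apply/idP/idP.
  by move=> xy; apply/existsP; exists x; apply/existsP; exists y; rewrite xy eqxx.
case/existsP=> x' /existsP[y' /andP[xy' /eqP e2]].
case: (set2_eq_cases e2 (gadj_neq (fhom _ _ xy'))) => -[/finj -> /finj ->] //.
by rewrite gsym.
Qed.

Lemma copy_setP SE : SE \in copy_set ->
  exists2 f, injective f /\ {homo f : x y / gadj x y} & SE = copy_of f.
Proof.
case: SE => S E; rewrite finset.inE /= => /andP[/forall_inP hE].
case/existsP=> f /and3P[/injectiveP finj /eqP hS /forallP hadj]; subst S.
have fadj x y : gadj x y = ([set f x; f y] \in E) by apply/eqP; exact: forallP (hadj x) y.
have edgeE e : e \in E -> exists x, exists2 y, gadj x y & e = [set f x; f y].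
  move=> eE; have /andP[/existsP[a /existsP[b /andP[ab /eqP ee]]] sub] := hE _ eE.
  have /(fintype.subsetP sub) fa : a \in e by rewrite ee set21.
  have /(fintype.subsetP sub) fb : b \in e by rewrite ee set22.
  case/imsetP: fa => x _ ex; case/imsetP: fb => y _ ey.
  subst a b e.
  by exists x; exists y; rewrite // fadj.
exists f; first split => // x y.
  rewrite fadj => /hE /andP[/existsP[a /existsP[b /andP[ab /eqP e2]]] _].
  by case: (set2_eq_cases e2 (gadj_neq ab)) => -[-> ->] //; rewrite gsym.
congr pair; apply/setP => e; rewrite finset.inE; apply/idP/existsP.
  by case/edgeE=> x [y xy ->]; exists x; apply/existsP; exists y; rewrite xy eqxx.
by case=> x /existsP[y /andP[xy /eqP ->]]; rewrite -fadj.
Qed.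

Lemma Ncount_gt0_card_le : (0 < Ncount H G)%N -> (#|gV H| <= #|gV G|)%N.
Proof. by case/card_gt0P=> _ /copy_setP[f [finj _] _]; apply: leq_card finj. Qed.

End CopiesOfH.

Lemma connected_graph_gt0 (H : graph) : connected_graph H -> (0 < #|gV H|)%N.
Proof. by case/andP. Qed.

Lemma connected_graph_const (H : graph) (T : eqType) (s : gV H -> T) :
  connected_graph H -> (forall x y, gadj x y -> s x = s y) -> forall x y, s x = s y.
Proof.
case/andP=> _ /forallP Hconn s_adj x y.
have cl : fingraph.closed gadj [pred z | s z == s x].
  by move=> z w /s_adj szw; rewrite !finset.inE szw.
by have := closed_connect cl (forallP (Hconn x) y); rewrite !finset.inE eqxx => /esym/eqP.
Qed.

Section MapCopy.
Variables (H G1 G : graph) (phi : gV G1 -> gV G).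

Definition map_copy (SE : {set gV G1} * {set {set gV G1}}) :=
  (phi @: SE.1, (fun e : {set gV G1} => phi @: e) @: SE.2).

Lemma map_copy_of (f : gV H -> gV G1) : map_copy (copy_of f) = copy_of (phi \o f).
Proof.
rewrite /map_copy /copy_of /= -imset_comp; congr pair.
apply/setP => e; apply/imsetP/idP.
  case=> _ /[!finset.inE] /existsP[x /existsP[y /andP[xy /eqP ->]]] ->.
  by apply/existsP; exists x; apply/existsP; exists y; rewrite xy imsetU1 imset_set1 eqxx.
rewrite finset.inE => /existsP[x /existsP[y /andP[xy /eqP ->]]].
exists [set f x; f y]; last by rewrite imsetU1 imset_set1.
by rewrite finset.inE; apply/existsP; exists x; apply/existsP; exists y; rewrite xy eqxx.
Qed.

Hypothesis phi_inj : injective phi.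

Lemma map_copy_inj : injective map_copy.
Proof.
by move=> [S1 E1] [S2 E2] [/(imset_inj phi_inj) -> /(imset_inj (imset_inj phi_inj)) ->].
Qed.

Lemma map_copy_in SE : {homo phi : a b / gadj a b} ->
  SE \in copy_set H G1 -> map_copy SE \in copy_set H G.
Proof.
move=> phi_hom /copy_setP[f [finj fhom] ->]; rewrite map_copy_of.
by apply: copy_of_in => [|x y /fhom /phi_hom]; first exact: inj_comp.
Qed.

Lemma Ncount_le_map : {homo phi : a b / gadj a b} -> (Ncount H G1 <= Ncount H G)%N.
Proof.
move=> phi_hom; rewrite !NcountE -(card_imset _ map_copy_inj).
by apply/subset_leq_card/fintype.subsetP => _ /imsetP[SE /(map_copy_in phi_hom) ? ->].
Qed.

Lemma copy_of_factor (f : gV H -> gV G) (g : gV H -> gV G1) :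
  {mono phi : a b / gadj a b} -> injective f -> {homo f : x y / gadj x y} ->
  f =1 phi \o g -> copy_of f \in map_copy @: copy_set H G1.
Proof.
move=> phi_mono finj fhom fg; apply/imsetP; exists (copy_of g).
  apply: copy_of_in => [x y gxy|x y /fhom]; first by apply: finj; rewrite !fg /= gxy.
  by rewrite !fg /= phi_mono.
by rewrite map_copy_of; apply: eq_copy_of.
Qed.

End MapCopy.

Lemma map_copy_neq (H G1 G2 G : graph) (phi1 : gV G1 -> gV G) (phi2 : gV G2 -> gV G)
    (SE1 : {set gV G1} * {set {set gV G1}}) {SE2 : {set gV G2} * {set {set gV G2}}} :
  (0 < #|gV H|)%N -> (forall a b, phi1 a != phi2 b) ->
  SE1 \in copy_set H G1 -> map_copy phi1 SE1 <> map_copy phi2 SE2.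
Proof.
case/card_gt0P=> h _ phi12 /copy_setP[f _ ->] eSE.
have : phi1 (f h) \in (map_copy phi1 (copy_of f)).1 by rewrite /= !imset_f ?in_setT.
by rewrite eSE => /imsetP[b _ /eqP]; rewrite (negbTE (phi12 _ _)).
Qed.

Definition unionl (G1 G2 : graph) : gV G1 -> gV (gunion G1 G2) := inl.
Definition unionr (G1 G2 : graph) : gV G2 -> gV (gunion G1 G2) := inr.

Lemma Ncount_unionl (H G1 G2 : graph) : (Ncount H G1 <= Ncount H (gunion G1 G2))%N.
Proof. by apply: (@Ncount_le_map _ _ _ (@unionl G1 G2)) => // x y []. Qed.

Lemma Ncount_union (H G1 G2 : graph) : connected_graph H ->
  Ncount H (gunion G1 G2) = (Ncount H G1 + Ncount H G2)%N.
Proof.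
move=> Hconn; have /card_gt0P[h _] := connected_graph_gt0 Hconn.
pose A := map_copy (@unionl G1 G2) @: copy_set H G1.
pose B := map_copy (@unionr G1 G2) @: copy_set H G2.
have copy_setU : copy_set H (gunion G1 G2) = A :|: B.
  apply/setP => SE; apply/idP/setUP => [/copy_setP[f [finj fhom] ->]|].
    pose side (z : gV (gunion G1 G2)) := if z is inl _ then true else false.
    have side_f x : side (f x) = side (f h).
      apply: (connected_graph_const (s := side \o f) Hconn) => a b /fhom /=.
      by case: (f a) (f b) => ? [].
    case: (f h) side_f => [a0|b0] /= side_f; [left|right].
    - apply: (copy_of_factor (phi := @unionl G1 G2)
                             (g := fun x => if f x is inl a then a else a0)) => // x /=.
      by have := side_f x; case: (f x).
    - apply: (copy_of_factor (phi := @unionr G1 G2)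
                             (g := fun x => if f x is inr b then b else b0)) => // x /=.
      by have := side_f x; case: (f x).
  by case=> /imsetP[SE' SE'_in ->]; apply: map_copy_in SE'_in => // x y [].
have AB : [disjoint A & B].
  apply/pred0P => SE /=; apply/negbTE/negP => /andP[/imsetP[SE1 SE1_in ->] /imsetP[SE2 _]].
  exact: (map_copy_neq (phi1 := @unionl G1 G2) (phi2 := @unionr G1 G2)
           (connected_graph_gt0 Hconn) (fun _ _ => isT) SE1_in).
have cardA : #|A| = Ncount H G1 by rewrite card_imset //; apply: map_copy_inj => ? ? [].
have cardB : #|B| = Ncount H G2 by rewrite card_imset //; apply: map_copy_inj => ? ? [].
by rewrite NcountE copy_setU -cardA -cardB; apply/eqP; rewrite (leq_card_setU A B).2.
Qed.

Definition copy_in (m : nat) (G : graph) (i : 'I_m) : gV G -> gV (copies m G) := pair i.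

Lemma copy_in_mono m G i : {mono @copy_in m G i : a b / gadj a b}.
Proof. by move=> a b; rewrite /= /copies_adj /= eqxx. Qed.

Definition map_copy_at m G (iSE : 'I_m * ({set gV G} * {set {set gV G}})) :=
  map_copy (copy_in iSE.1) iSE.2.

Lemma map_copy_at_inj (H G : graph) m : (0 < #|gV H|)%N ->
  {in finset.setX [set: 'I_m]%SET (copy_set H G) &, injective (@map_copy_at m G)}.
Proof.
move=> H_gt0 [i SE] [j SE'] /finset.setXP[_ SE_in] _; rewrite /map_copy_at /= => eSE.
have ij : i = j.
  apply/eqP; apply: contraT => nij; exfalso.
  apply: (map_copy_neq (G := copies m G) H_gt0 _ SE_in eSE) => a b.
  by rewrite /copy_in xpair_eqE negb_and nij.
by subst j; rewrite (map_copy_inj (G := copies m G) _ eSE) // => ? ? [].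
Qed.

Lemma Ncount_copies_ge (H G : graph) m : (0 < #|gV H|)%N ->
  (m * Ncount H G <= Ncount H (copies m G))%N.
Proof.
move=> H_gt0; rewrite !NcountE -[m in (m * _)%N]card_ord -cardsT -cardsX.
rewrite -(card_in_imset (@map_copy_at_inj H G m H_gt0)).
apply/subset_leq_card/fintype.subsetP => _ /imsetP[[i SE] /finset.setXP[_ SE_in] ->].
by apply: map_copy_in SE_in => //; [move=> ? ? []| exact/mono2W/copy_in_mono].
Qed.

Lemma Ncount_copies (H G : graph) m : connected_graph H ->
  Ncount H (copies m G) = (m * Ncount H G)%N.
Proof.
move=> Hconn; have H_gt0 := connected_graph_gt0 Hconn; have /card_gt0P[h _] := H_gt0.
apply/eqP; rewrite eqn_leq Ncount_copies_ge // andbT !NcountE.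
rewrite -[m in (m * _)%N]card_ord -cardsT -cardsX.
rewrite -(card_in_imset (@map_copy_at_inj H G m H_gt0)).
apply/subset_leq_card/fintype.subsetP => _ /copy_setP[f [finj fhom] ->].
have index_f x : (f x).1 = (f h).1.
  by apply: (connected_graph_const (s := fst \o f) Hconn) => a b /fhom /andP[/eqP].
have /imsetP[SE SE_in ->] : copy_of f \in map_copy (copy_in (f h).1) @: copy_set H G.
  apply: (copy_of_factor (g := snd \o f)) => // [|x]; first exact: copy_in_mono.
  by rewrite /= /copy_in -(index_f x) -surjective_pairing.
by apply/imsetP; exists ((f h).1, SE); rewrite // finset.in_setX finset.in_setT.
Qed.

Lemma connected_Kgraph u : (0 < u)%N -> connected_graph (Kgraph u).
Proof.
move=> u_gt0; apply/andP; split; first by rewrite card_ord.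
apply/forallP => x; apply/forallP => y.
by case: (eqVneq x y) => [->|xy]; [exact: connect0 | exact: connect1].
Qed.

Lemma ku_Kgraph u : ku u (Kgraph u) = 1%N.
Proof.
apply/eqP/cards1P; exists (copy_of (@id (gV (Kgraph u)))).
apply/setP => SE; rewrite finset.in_set1; apply/idP/eqP => [|->]; last exact: copy_of_in.
case/copy_setP=> f [finj _] ->; have [g fK gK] := injF_bij finj.
congr pair; apply/setP; [move=> y | move=> e].
  apply/imsetP/imsetP => -[x _ ->]; first by exists (f x); rewrite ?in_setT.
  by exists (g x); rewrite ?gK ?in_setT.
rewrite !finset.inE; apply/existsP/existsP => -[x /existsP[y /andP[xy /eqP ->]]].
  by exists (f x); apply/existsP; exists (f y); rewrite /= (inj_eq finj) eqxx andbT.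
by exists (g x); apply/existsP; exists (g y); rewrite !gK /= (can_eq gK) eqxx andbT.
Qed.

Lemma ku_union u G1 G2 : (0 < u)%N -> ku u (gunion G1 G2) = (ku u G1 + ku u G2)%N.
Proof. by move=> u_gt0; apply/Ncount_union/connected_Kgraph. Qed.

Lemma ku_copies u G m : (0 < u)%N -> ku u (copies m G) = (m * ku u G)%N.
Proof. by move=> u_gt0; apply/Ncount_copies/connected_Kgraph. Qed.

Section Ffree.
Variable F : graph -> Prop.
Hypothesis F_connected : forall F0, F F0 -> connected_graph F0.

Lemma Ffree_union G1 G2 : Ffree F G1 -> Ffree F G2 -> Ffree F (gunion G1 G2).
Proof. by move=> G1F G2F F0 F0F; rewrite Ncount_union ?G1F ?G2F ?F_connected. Qed.

Lemma Ffree_copies G m : Ffree F G -> Ffree F (copies m G).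
Proof. by move=> GF F0 F0F; rewrite Ncount_copies ?GF ?muln0 ?F_connected. Qed.

End Ffree.

Local Open Scope ring_scope.

Lemma ratio_dist1_le (R : realFieldType) (n q x y : R) : 0 < n -> 1 <= q ->
  n * q <= x -> x <= y -> y <= n * (q + 1) ->
  `|1 - y / x| <= q^-1 /\ `|1 - x / y| <= q^-1.
Proof.
move=> n_gt0 q_ge1 nq_x xy yn.
have x_gt0 : 0 < x by nra.
have y_gt0 : 0 < y by lra.
have q_gt0 : 0 < q by lra.
have gap : (y - x) / x <= q^-1.
  by rewrite ler_pdivrMr // mulrC ler_pdivlMr; nra.
have -> : `|1 - y / x| = (y - x) / x.
  by rewrite ler0_norm ?subr_le0 ?ler_pdivlMr ?mul1r // opprB mulrBl divff ?gt_eqF.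
have -> : `|1 - x / y| = (y - x) / y.
  by rewrite ger0_norm ?subr_ge0 ?ler_pdivrMr ?mul1r // mulrBl divff ?gt_eqF.
split=> //; apply: le_trans gap; rewrite ler_pdivrMr // mulrAC ler_pdivlMr //.
by apply: ler_wpM2l; lra.
Qed.

Local Open Scope classical_set_scope.
Local Open Scope ereal_scope.

Lemma cvge1_of_dist_le (R : realType) (a : nat -> \bar R) k : (0 < k)%N ->
  (forall p, (k <= p)%N ->
     exists2 c : R, a p = c%:E & (`|1 - c| <= ((p %/ k)%:R)^-1)%R) ->
  a p @[p --> \oo] --> 1.
Proof.
move=> k_gt0 ha; apply: cvg_EFin; first by exists k => // p /= /ha[c -> _].
apply/cvgrPdist_le => eps eps_gt0.
pose T := (Num.Def.truncn eps^-1).+1.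
exists (T * k)%N => // p /= Tk_p.
have T_q : (T <= p %/ k)%N by rewrite leq_divRL.
have [c -> dist_c] := ha p (leq_trans (leq_pmull _ (ltn0Sn _)) Tk_p).
apply: le_trans dist_c _.
have q_gt0 : (0 < (p %/ k)%:R :> R)%R by rewrite ltr0n (leq_trans _ T_q).
rewrite -[eps]invrK lef_pV2 ?posrE ?invr_gt0 //.
by rewrite ltW // (lt_le_trans (truncnS_gt _)) // ler_nat.
Qed.

(* [limn] of a divergent sequence is the default value 0. *)
Lemma cvge_of_limn_neq0 (R : realType) (a : nat -> \bar R) (l : \bar R) :
  limn a = l -> l != 0 -> a n @[n --> \oo] --> l.
Proof.
move=> <- l_neq0; case: (pselect (cvgn a)) => [//|/dvgP a_dvg].
by rewrite a_dvg eqxx in l_neq0.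
Qed.

Section ExtremalNumber.
Variables (R : realType) (u : nat) (H : graph) (F : graph -> Prop).

Lemma exu_ge_Ncount G : Ffree F G -> ((Ncount H G)%:R)%:E <= exu R u (ku u G) H F.
Proof. by move=> GF; apply: ereal_sup_ubound; right; exists G. Qed.

Lemma exu_le p (c : R) : (0 <= c)%R ->
  (forall G, Ffree F G -> ku u G = p -> ((Ncount H G)%:R <= c)%R) -> exu R u p H F <= c%:E.
Proof.
move=> c_ge0 Nc; apply: ge_ereal_sup => _ [-> | [G [GF kG ->]]]; rewrite lee_fin //.
exact: Nc kG.
Qed.

Hypotheses (u_gt0 : (0 < u)%N) (H_gt0 : (0 < #|gV H|)%N).
Hypothesis F_connected : forall F0, F F0 -> connected_graph F0.

Lemma exu_ge_copies G m : Ffree F G ->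
  ((m * Ncount H G)%N%:R)%:E <= exu R u (m * ku u G) H F.
Proof.
move=> GF; rewrite -ku_copies //.
apply: le_trans (exu_ge_Ncount (Ffree_copies _ _ GF)) => //.
by rewrite lee_fin ler_nat Ncount_copies_ge.
Qed.

Lemma Ncount_le_limit (rho : R) :
  exu R u p H F * ((p%:R)^-1)%:E @[p --> \oo] --> rho%:E ->
  forall G, Ffree F G -> (0 < ku u G)%N -> ((Ncount H G)%:R <= rho * (ku u G)%:R)%R.
Proof.
move=> exu_cvg G GF kG_gt0; set p := ku u G in kG_gt0 *.
have sub_cvg : exu R u (m * p) H F * (((m * p)%N%:R)^-1)%:E @[m --> \oo] --> rho%:E.
  exact: cvg_comp (cvg_mulnr _ kG_gt0) exu_cvg.
have N_le : \forall m \near \oo, ((Ncount H G)%:R / p%:R)%:E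
                                  <= exu R u (m * p) H F * (((m * p)%N%:R)^-1)%:E.
  exists 1%N => // m /= m_gt0.
  have -> : ((Ncount H G)%:R / p%:R = (m * Ncount H G)%N%:R * ((m * p)%N%:R)^-1 :> R)%R.
    by rewrite !natrM invfM mulrACA divff ?mul1r // pnatr_eq0 -lt0n.
  by rewrite EFinM lee_wpmul2r ?lee_fin ?invr_ge0 // exu_ge_copies.
have : ((Ncount H G)%:R / p%:R)%:E <= rho%:E.
  by rewrite -(cvg_lim (@ereal_hausdorff R) sub_cvg); apply: lime_ge (cvgP _ sub_cvg) N_le.
by rewrite lee_fin ler_pdivrMr ?ltr0n.
Qed.

End ExtremalNumber.

Section ExtremalGraphs.
Variables (R : realType) (u : nat) (H : graph) (F : graph -> Prop) (L : graph).
Hypotheses (u_gt0 : (0 < u)%N) (H_gt0 : (0 < #|gV H|)%N).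
Hypothesis F_connected : forall F0, F F0 -> connected_graph F0.
Hypotheses (Ku_free : Ffree F (Kgraph u)) (L_free : Ffree F L).
Hypotheses (kL_gt0 : (0 < ku u L)%N) (NL_gt0 : (0 < Ncount H L)%N).

Let k := ku u L.
Let n := Ncount H L.
Let rho : R := (n%:R / k%:R)%R.
Let extremal p := gunion (copies (p %/ k) L) (copies (p %% k) (Kgraph u)).

Hypothesis Pu_rho : Pu R u H F = rho%:E.

Let n_gt0 : (0 < n%:R :> R)%R. Proof. by rewrite ltr0n. Qed.
Let rho_gt0 : (0 < rho)%R. Proof. by rewrite divr_gt0 ?ltr0n. Qed.

Lemma exu_le_rho p : (0 < p)%N -> exu R u p H F <= (rho * p%:R)%:E.
Proof.
have exu_cvg := cvge_of_limn_neq0 Pu_rho (lt0r_neq0 rho_gt0).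
move=> p_gt0; apply: exu_le => [|G GF kG]; first by rewrite mulr_ge0 ?ler0n ?ltW.
by rewrite -kG (Ncount_le_limit u_gt0 H_gt0 F_connected exu_cvg GF) // kG.
Qed.

Lemma exu_ge_extremal p : ((Ncount H (extremal p))%:R)%:E <= exu R u p H F.
Proof.
have extremal_free : Ffree F (extremal p).
  by apply: (Ffree_union F_connected); apply: (Ffree_copies F_connected).
have := exu_ge_Ncount R u H extremal_free.
by rewrite ku_union // !ku_copies // ku_Kgraph muln1 -divn_eq.
Qed.

Lemma exu_bracket p : (k <= p)%N -> exists2 y : R, exu R u p H F = y%:E &
  [/\ n%:R * (p %/ k)%:R <= (Ncount H (extremal p))%:R :> R,
      (Ncount H (extremal p))%:R <= y, y <= rho * p%:R
    & rho * p%:R <= n%:R * ((p %/ k)%:R + 1)]%R.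
Proof.
move=> k_le_p; have p_gt0 : (0 < p)%N := leq_trans kL_gt0 k_le_p.
have := exu_ge_extremal p; have := exu_le_rho p_gt0.
case: (exu R u p H F) => [y||] //; rewrite !lee_fin => y_le y_ge; exists y => //; split=> //.
  by rewrite -natrM ler_nat mulnC (leq_trans _ (Ncount_unionl _ _ _)) ?Ncount_copies_ge.
rewrite /rho mulrAC ler_pdivrMr ?ltr0n // -mulrA ler_wpM2l // natr1 -natrM ler_nat.
by rewrite ltnW // ltn_ceil.
Qed.

Lemma exu_over_extremal_cvg :
  exu R u p H F * (((Ncount H (extremal p))%:R)^-1)%:E @[p --> \oo] --> 1.
Proof.
apply: (cvge1_of_dist_le kL_gt0) => p k_le_p.
have q_ge1 : (1 <= (p %/ k)%:R :> R)%R by rewrite ler1n divn_gt0.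
have [y -> [nq_N N_y y_rho rho_nq]] := exu_bracket k_le_p.
exists (y / (Ncount H (extremal p))%:R)%R; first by rewrite EFinM.
by have [] := ratio_dist1_le n_gt0 q_ge1 nq_N N_y (le_trans y_rho rho_nq).
Qed.

Lemma exu_over_linear_cvg : exu R u p H F * ((rho * p%:R)^-1)%:E @[p --> \oo] --> 1.
Proof.
apply: (cvge1_of_dist_le kL_gt0) => p k_le_p.
have q_ge1 : (1 <= (p %/ k)%:R :> R)%R by rewrite ler1n divn_gt0.
have [y -> [nq_N N_y y_rho rho_nq]] := exu_bracket k_le_p.
exists (y / (rho * p%:R))%R; first by rewrite EFinM.
by have [] := ratio_dist1_le n_gt0 q_ge1 (le_trans nq_N N_y) y_rho rho_nq.
Qed.

Lemma exu_dvdn p : (0 < p)%N -> (k %| p)%N ->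
  exu R u p H F = ((Ncount H (copies (p %/ k) L))%:R)%:E.
Proof.
move=> p_gt0 /dvdnP[q p_eq]; subst p; rewrite mulnK //; apply/le_anti/andP; split.
  apply: le_trans (exu_le_rho p_gt0) _; rewrite lee_fin.
  have -> : (rho * (q * k)%N%:R = (q * n)%N%:R :> R)%R.
    by rewrite /rho !natrM [(q%:R * _)%R]mulrC mulrA divfK 1?mulrC // pnatr_eq0 -lt0n.
  by rewrite ler_nat Ncount_copies_ge.
have := exu_ge_Ncount R u H (Ffree_copies F_connected q L_free).
by rewrite ku_copies.
Qed.

End ExtremalGraphs.

Theorem mainTheorem6 (R : realType) (u : nat) (H : graph) (F : graph -> Prop)
  (L : graph) :
  (1 <= u)%N ->
  (1 <= ku u H)%N ->
  (forall F0, F F0 -> connected_graph F0 /\ Ncount F0 (Kgraph u) = 0%N) ->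
  Ffree F L ->
  (1 <= ku u L)%N ->
  (1 <= Ncount H L)%N ->
  (rhou R u H L)%:E = Pu R u H F ->
  [/\ (fun p : nat =>
         exu R u p H F *
         ((Ncount H (gunion (copies (p %/ ku u L) L)
                            (copies (p %% ku u L) (Kgraph u))))%:R^-1)%:E)
        @ \oo --> 1,
      (fun p : nat =>
         exu R u p H F *
         ((((Ncount H L)%:R / (ku u L)%:R) * p%:R)^-1)%:E)
        @ \oo --> 1
    & forall p : nat, (0 < p)%N -> (ku u L %| p)%N ->
        exu R u p H F = ((Ncount H (copies (p %/ ku u L) L))%:R)%:E ].
Proof.
move=> u_gt0 kH_gt0 F_props L_free kL_gt0 NL_gt0 /esym Pu_rho.
have H_gt0 : (0 < #|gV H|)%N.
  apply: leq_trans u_gt0 _; rewrite -[u in (u <= _)%N]card_ord.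
  exact: (@Ncount_gt0_card_le (Kgraph u) H kH_gt0).
have F_connected F0 : F F0 -> connected_graph F0 by case/F_props.
have Ku_free : Ffree F (Kgraph u) by move=> F0 /F_props[].
split; [exact: exu_over_extremal_cvg | exact: exu_over_linear_cvg | exact: exu_dvdn].
Qed.
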